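(* Let $\approx$ be an equivalence relation on $\mathbb W$. Then $\approx$ satisfies (AP) if and only if it satisfies both (SP) and (DP), where: (AP) for all $A,B\in\mathbb W$: $A\approx B$ iff $A\setminus B\approx B\setminus A$; (SP) for all $A,A',B,B'\in\mathbb W$ with $A\cap B=\emptyset$ and $A'\cap B'=\emptyset$: if $A\approx A'$ and $B\approx B'$ then $A\cup B\approx A'\cup B'$; (DP) for all $A,A',C,C'\in\mathbb W$ with $A\subseteq C$ and $A'\subseteq C'$: if $A\approx A'$ and $C\approx C'$ then $C\setminus A\approx C'\setminus A'$.
   Context: Let $\mathbb N=\{0,1,2,\dots\}$. $\mathbb{W}$ is the family of finitary point sets: sets $A\subseteq\bigcup_{k\ge1}\mathbb N^k$ of finite tuples of natural numbers such that for every $n\in\mathbb N$ there is $h$ with $A\cap\{0,\dots,n\}^k=\emptyset$ for all $k>h$. *)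

From Stdlib Require Import List Arith.

(* A point set: a set of finite tuples of naturals, tuples encoded as lists. *)
Definition pset := list nat -> Prop.

(* A is finitary (A ∈ 𝕎): A consists of tuples of length k >= 1, and for every n
   there is h such that A ∩ {0,...,n}^k = ∅ for all k > h. *)
Definition finitary (A : pset) : Prop :=
  (forall t, A t -> 1 <= length t) /\
  forall n : nat, exists h : nat, forall t : list nat,
    A t -> h < length t -> ~ (forall x, In x t -> x <= n).

Definition psubset (A B : pset) : Prop := forall t, A t -> B t.
Definition pdisjoint (A B : pset) : Prop := forall t, ~ (A t /\ B t).
Definition pdiff (A B : pset) : pset := fun t => A t /\ ~ B t.
Definition punion (A B : pset) : pset := fun t => A t \/ B t.

(* R is an equivalence relation on 𝕎 (only its restriction to 𝕎 matters). *)
Definition equiv_on_W (R : pset -> pset -> Prop) : Prop :=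
  (forall A, finitary A -> R A A) /\
  (forall A B, finitary A -> finitary B -> R A B -> R B A) /\
  (forall A B C, finitary A -> finitary B -> finitary C ->
     R A B -> R B C -> R A C).

Definition AP (R : pset -> pset -> Prop) : Prop :=
  forall A B, finitary A -> finitary B ->
    (R A B <-> R (pdiff A B) (pdiff B A)).

Definition SP (R : pset -> pset -> Prop) : Prop :=
  forall A A' B B', finitary A -> finitary A' -> finitary B -> finitary B' ->
    pdisjoint A B -> pdisjoint A' B' ->
    R A A' -> R B B' -> R (punion A B) (punion A' B').

Definition DP (R : pset -> pset -> Prop) : Prop :=
  forall A A' C C', finitary A -> finitary A' -> finitary C -> finitary C' ->
    psubset A C -> psubset A' C' ->
    R A A' -> R C C' -> R (pdiff C A) (pdiff C' A').

From Stdlib Require Import Lia Classical FunctionalExtensionality PropExtensionality.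

(* Under (AP), whether [A ≈ B] holds depends only on the pair (A∖B, B∖A).
   (SP) and (DP) then follow from a single use of transitivity through an
   intermediate set chosen so that each of the two steps has the difference
   pair of one of the hypotheses, up to sets common to both sides.
   Conversely, with I = A∩B we have A∖B = A∖I and A = (A∖B) ∪ I, so (DP) and
   (SP), applied together with I ≈ I, give the two directions of (AP). *)

Definition pinter (A B : pset) : pset := fun t => A t /\ B t.

Lemma pset_ext (P Q : pset) : (forall t, P t <-> Q t) -> P = Q.
Proof.
  intro H; apply functional_extensionality; intro t.
  apply propositional_extensionality, H.
Qed.

Ltac case_atoms t :=
  repeat match goal with
  | X : pset |- _ =>
      lazymatch goal with
      | _ : X t |- _ => fail
      | _ : ~ X t |- _ => fail
      | _ => destruct (classic (X t))
      end
  end.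

Ltac pset_solve :=
  try apply pset_ext;
  let t := fresh "t" in
  intro t;
  unfold pdiff, punion, pinter, pdisjoint, psubset in *;
  repeat match goal with H : forall _ : list nat, _ |- _ => specialize (H t) end;
  case_atoms t; tauto.

Lemma finitary_sub (A B : pset) : finitary B -> psubset A B -> finitary A.
Proof.
  intros [Bne Bfin] AB; split.
  - intros t At; apply Bne, AB, At.
  - intro n; destruct (Bfin n) as [h Hh]; exists h.
    intros t At; apply Hh, AB, At.
Qed.

Lemma finitary_union (A B : pset) :
  finitary A -> finitary B -> finitary (punion A B).
Proof.
  intros [Ane Afin] [Bne Bfin]; split.
  - intros t [At | Bt]; auto.
  - intro n; destruct (Afin n) as [hA HA], (Bfin n) as [hB HB].
    exists (max hA hB); intros t [At | Bt] Hlen.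
    + apply HA; [assumption | lia].
    + apply HB; [assumption | lia].
Qed.

Lemma finitary_diff (A B : pset) : finitary A -> finitary (pdiff A B).
Proof. intro fA; apply (finitary_sub _ A fA); intros t [At _]; exact At. Qed.

Lemma finitary_inter (A B : pset) : finitary A -> finitary (pinter A B).
Proof. intro fA; apply (finitary_sub _ A fA); intros t [At _]; exact At. Qed.

Create HintDb finitary.
#[local] Hint Resolve finitary_union finitary_diff finitary_inter : finitary.

Section AP_consequences.

Variable R : pset -> pset -> Prop.
Hypothesis R_sym : forall A B, finitary A -> finitary B -> R A B -> R B A.
Hypothesis R_trans : forall A B C, finitary A -> finitary B -> finitary C ->
  R A B -> R B C -> R A C.
Hypothesis R_AP : AP R.

Lemma AP_transfer (X Y U V : pset) :
  finitary X -> finitary Y -> finitary U -> finitary V ->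
  pdiff U V = pdiff X Y -> pdiff V U = pdiff Y X -> R X Y -> R U V.
Proof.
  intros fX fY fU fV EUV EVU HXY.
  apply (R_AP U V fU fV); rewrite EUV, EVU.
  apply (R_AP X Y fX fY), HXY.
Qed.

Lemma AP_implies_SP : SP R.
Proof.
  intros A A' B B' fA fA' fB fB' dAB dA'B' HA HB.
  assert (hA : R (punion A (pdiff B A')) (punion A' B))
    by (apply (AP_transfer A A'); auto with finitary; pset_solve).
  assert (hB : R (punion A' B) (punion B' (pdiff A' B)))
    by (apply (AP_transfer B B'); auto with finitary; pset_solve).
  apply (AP_transfer (punion A (pdiff B A')) (punion B' (pdiff A' B)));
    auto with finitary; try pset_solve.
  apply (R_trans _ (punion A' B)); auto with finitary.
Qed.

Lemma AP_implies_DP : DP R.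
Proof.
  intros A A' C C' fA fA' fC fC' sAC sA'C' HA HC.
  assert (hA : R (pdiff C A') (pdiff (punion C A') A))
    by (apply (AP_transfer A A'); auto with finitary; pset_solve).
  assert (hC : R (pdiff C A') (punion (pdiff C' A') (pdiff A' C)))
    by (apply (AP_transfer C C'); auto with finitary; pset_solve).
  apply (AP_transfer (pdiff (punion C A') A)
                     (punion (pdiff C' A') (pdiff A' C)));
    auto with finitary; try pset_solve.
  apply (R_trans _ (pdiff C A')); auto with finitary.
Qed.

End AP_consequences.

Lemma SP_DP_implies_AP (R : pset -> pset -> Prop) :
  (forall A, finitary A -> R A A) -> SP R -> DP R -> AP R.
Proof.
  intros R_refl sp dp A B fA fB.
  assert (fI : finitary (pinter A B)) by auto with finitary.
  split; intro H.
  - replace (pdiff A B) with (pdiff A (pinter A B)) by pset_solve.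
    replace (pdiff B A) with (pdiff B (pinter A B)) by pset_solve.
    apply dp; auto; pset_solve.
  - assert (EA : punion (pdiff A B) (pinter A B) = A) by pset_solve.
    assert (EB : punion (pdiff B A) (pinter A B) = B) by pset_solve.
    assert (HI : R (punion (pdiff A B) (pinter A B))
                   (punion (pdiff B A) (pinter A B)))
      by (apply sp; auto with finitary; pset_solve).
    rewrite EA, EB in HI; exact HI.
Qed.

Theorem proposition1p7 (R : pset -> pset -> Prop) :
  equiv_on_W R -> (AP R <-> SP R /\ DP R).
Proof.
  intros [R_refl [R_sym R_trans]]; split.
  - intro ap; split.
    + exact (AP_implies_SP R R_trans ap).
    + exact (AP_implies_DP R R_sym R_trans ap).
  - intros [sp dp]; exact (SP_DP_implies_AP R R_refl sp dp).
Qed.
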